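(* Let $n,d,\ell$ be positive integers with $n\geqslant\ell\geqslant d$, let $0<\beta\leqslant1$, and let $\boldsymbol{X}$ be a spreadable, $d$-dimensional random array on $[n]$ whose entries take values in a measurable space $\mathcal{X}$, and assume that $\boldsymbol{X}$ is not $(\beta,\ell)$-dissociated. Then there exists a measurable function $f\colon\mathcal{X}^{\binom{[n]}{d}}\to\{0,1\}$ such that for every $I\in\binom{[n]}{\ell}$, \[ \mathbb{P}\big(\big|\mathbb{E}[f(\boldsymbol{X})\,|\,\mathcal{F}_I]-\mathbb{E}[f(\boldsymbol{X})]\big|\geqslant\beta/2\big)\geqslant\beta/2. \]
   Context: $[n]=\{1,\dots,n\}$, $\binom{I}{d}$ is the set of $d$-element subsets of $I$. For $J\subseteq[n]$ with $|J|\geqslant d$, $\boldsymbol{X}_J=\langle X_s:s\in\binom{J}{d}\rangle$ and $\mathcal{F}_J=\sigma(\{X_s:s\in\binom{J}{d}\})$. $\boldsymbol{X}$ is spreadable if for all $J,K\subseteq[n]$ with $|J|=|K|\geqslant d$, $\boldsymbol{X}_J$ and $\boldsymbol{X}_K$ have the same law (identified via the increasing bijection $J\to K$). $\boldsymbol{X}$ is $(\beta,\ell)$-dissociated if for every $J,K\subseteq[n]$ with $|J|,|K|\geqslant d$, $|J|+|K|\leqslant\ell$ and $\max(J)<\min(K)$, and all events $A\in\mathcal{F}_J$, $B\in\mathcal{F}_K$, $|\mathbb{P}(A\cap B)-\mathbb{P}(A)\mathbb{P}(B)|\leqslant\beta$. *)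

From HB Require Import structures.
From mathcomp Require Import all_boot all_order all_algebra.
From mathcomp Require Import all_classical all_reals all_analysis.
Set Implicit Arguments. Unset Strict Implicit. Unset Printing Implicit Defensive.
Import Order.TTheory GRing.Theory Num.Theory.
Local Open Scope classical_set_scope.
Local Open Scope ring_scope.

Definition dsub (k d : nat) := {t : {set 'I_k} | #|t| == d}.

Definition prod_meas (D : finType) (dX : measure_display) (Xs : measurableType dX)
  : set (set (D -> Xs)) :=
  <<s \bigcup_(i in [set: D])
        [set (fun x : D -> Xs => x i) @^-1` A | A in [set A : set Xs | measurable A]] >>.

(* Image of t ⊆ [k] under the increasing bijection [k] -> J (k = #|J|):
   x ∈ J is in the image iff its rank in J (number of smaller elements of J)
   belongs to t. *)
Definition embed (n k : nat) (J : {set 'I_n}) (t : {set 'I_k}) : {set 'I_n} :=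
  [set x in J | [exists i in t, nat_of_ord i == #|[set y in J | (y < x)%N]| ]].

Definition subarray (n k d : nat) {dT dX} {T : measurableType dT} {Xs : measurableType dX}
  (X : {set 'I_n} -> T -> Xs) (J : {set 'I_n}) : T -> (dsub k d -> Xs) :=
  fun w t => X (embed J (val t)) w.

Definition sigmaF (n d : nat) {dT dX} {T : measurableType dT} {Xs : measurableType dX}
  (X : {set 'I_n} -> T -> Xs) (J : {set 'I_n}) : set (set T) :=
  <<s [set B | exists s : {set 'I_n}, exists A : set Xs,
        [/\ s \subset J, #|s| = d, measurable A & B = X s @^-1` A]] >>.

Definition spreadable (R : realType) (n d : nat) {dT dX} {T : measurableType dT}
  {Xs : measurableType dX} (P : probability T R) (X : {set 'I_n} -> T -> Xs) :=
  forall (k : nat) (J K : {set 'I_n}), #|J| = k -> #|K| = k -> (d <= k)%N ->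
  forall B : set (dsub k d -> Xs), prod_meas B ->
    P (subarray (k:=k) (d:=d) X J @^-1` B) = P (subarray (k:=k) (d:=d) X K @^-1` B).

Definition dissociated (R : realType) (n d : nat) {dT dX} {T : measurableType dT}
  {Xs : measurableType dX} (P : probability T R) (X : {set 'I_n} -> T -> Xs)
  (beta : R) (l : nat) :=
  forall J K : {set 'I_n}, (d <= #|J|)%N -> (d <= #|K|)%N -> (#|J| + #|K| <= l)%N ->
  (forall x y, x \in J -> y \in K -> (x < y)%N) ->
  forall A B : set T, sigmaF d X J A -> sigmaF d X K B ->
    (`| P (A `&` B) - P A * P B | <= beta%:E)%E.

Definition cond_exp_version (R : realType) {dT} {T : measurableType dT}
  (P : probability T R) (F : set (set T)) (Z Y : T -> R) :=
  [/\ (forall B : set R, measurable B -> F (Y @^-1` B)),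
      P.-integrable setT (EFin \o Y) &
      forall A, F A -> (\int[P]_(x in A) (Y x)%:E = \int[P]_(x in A) (Z x)%:E)%E].

(* Non-dissociation gives J < K and events A in F_J, B in F_K with
   |P(A & B) - P(A) P(B)| > beta.  Let f be the indicator of A transported to
   the first |J| indices J0.  Given I of size l, pick K' in I of size |K| lying
   above J0; by spreadability the transported events A0 and B' have the same
   marginal and joint probabilities as A and B.  With Y = E[1_A0 | F_I] and
   c = P(A0), B' in F_I gives P(A0 & B') - c P(B') = E[(Y - c) 1_B'], which is at
   most P(|Y - c| >= beta/2) + beta/2 in absolute value; hence
   P(|Y - c| >= beta/2) > beta/2. *)

From HB Require Import structures.
From mathcomp Require Import all_boot all_order all_algebra.
From mathcomp Require Import all_classical all_reals all_analysis.
From mathcomp Require Import measurable_realfun zify lra.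
Import Order.TTheory GRing.Theory Num.Theory.
Set Implicit Arguments. Unset Strict Implicit. Unset Printing Implicit Defensive.

Section rank.
Variable n : nat.
Implicit Types (S J K s : {set 'I_n}) (x y : 'I_n).

Definition rank_in S x : nat := #|[set y in S | (y < x)%N]|.

Lemma rank_in_lt S x : x \in S -> rank_in S x < #|S|.
Proof.
move=> xS; apply: proper_card; apply/properP; split.
  by apply/fintype.subsetP => y; rewrite inE => /andP[].
by exists x => //; rewrite inE ltnn andbF.
Qed.

Lemma rank_in_ltn S x y : x \in S -> (x < y)%N -> rank_in S x < rank_in S y.
Proof.
move=> xS xy; apply: proper_card; apply/properP; split.
  by apply/fintype.subsetP => z; rewrite !inE => /andP[-> /ltn_trans->].
by exists x; rewrite !inE ?ltnn ?andbF // xS xy.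
Qed.

Lemma rank_in_inj S : {in S &, injective (rank_in S)}.
Proof.
move=> x y xS yS e; case: (ltngtP x y) => [xy|yx|]; last exact: val_inj.
- by have := rank_in_ltn xS xy; rewrite e ltnn.
- by have := rank_in_ltn yS yx; rewrite e ltnn.
Qed.

Section ord_rank.
Variables (k : nat) (S : {set 'I_n}).
Hypothesis cardS : #|S| = k.+1.

Definition ord_rank x : 'I_k.+1 := inord (rank_in S x).

Lemma ord_rank_inj : {in S &, injective ord_rank}.
Proof.
move=> x y xS yS /(congr1 val); rewrite /= !inordK -?cardS ?rank_in_lt //.
exact: rank_in_inj.
Qed.

Lemma ord_rank_onto : ord_rank @: S = [set: 'I_k.+1].
Proof.
apply/eqP; rewrite eqEcard finset.subsetT cardsT card_ord card_in_imset ?cardS ?leqnn //.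
exact: ord_rank_inj.
Qed.

Lemma embedE (t : {set 'I_k.+1}) : embed S t = S :&: ord_rank @^-1: t.
Proof.
apply/setP => x; rewrite !inE; case xS: (x \in S) => //=.
have rx : rank_in S x < k.+1 by rewrite -cardS rank_in_lt.
apply/existsP/idP => [[i /andP[it /eqP ei]]|xt].
  by rewrite /ord_rank /rank_in -ei inord_val.
by exists (ord_rank x); rewrite xt /= inordK.
Qed.

End ord_rank.

Lemma embed_card0 S (t : {set 'I_0}) : #|S| = 0 -> embed S t = finset.set0.
Proof. by move=> /eqP; rewrite cards_eq0 => /eqP->; apply/setP => x; rewrite !inE. Qed.

Lemma card_embed k S (t : {set 'I_k}) : #|S| = k -> #|embed S t| = #|t|.
Proof.
case: k t => [|k] t cardS.
  by rewrite embed_card0 // cards0; apply/esym/eqP; rewrite cards_eq0; apply/eqP/setP => -[].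
rewrite embedE // -(card_in_imset (f := ord_rank k S)); last first.
  by move=> x y /setIP[xS _] /setIP[yS _]; apply: ord_rank_inj.
congr #|pred_of_set _|; apply/setP => i; apply/imsetP/idP => [[x /setIP[_]]|it].
  by rewrite inE => xt ->.
have : i \in ord_rank k S @: S by rewrite ord_rank_onto // inE.
by case/imsetP => x xS ei; exists x => //; rewrite !inE xS -ei.
Qed.

Lemma embed_onto k S s : #|S| = k -> s \subset S ->
  exists t : {set 'I_k}, embed S t = s.
Proof.
case: k => [|k] cardS sS.
  have S0 : S = finset.set0 by apply/eqP; rewrite -cards_eq0 cardS.
  by exists finset.set0; rewrite embed_card0 //; apply/esym/eqP; rewrite -finset.subset0 -S0.
exists (ord_rank k S @: s); rewrite embedE //; apply/setP => x; rewrite !inE.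
case xS: (x \in S) => /=; last by apply/esym/negbTE; apply: contraFN xS => /(fintype.subsetP sS).
apply/imsetP/idP => [[y ys /ord_rank_inj e]|]; last by exists x.
by rewrite e // (fintype.subsetP sS).
Qed.

Definition precedes J K := forall x y, x \in J -> y \in K -> (x < y)%N.

Section precedes.
Variables J K : {set 'I_n}.
Hypothesis JK : precedes J K.

Lemma precedes_disjoint : [disjoint J & K].
Proof. by apply/pred0P => x /=; apply/negbTE/negP => /andP[xJ xK]; have := JK xJ xK; rewrite ltnn. Qed.

Lemma card_precedesU : #|J :|: K| = (#|J| + #|K|)%N.
Proof. by rewrite cardsU disjoint_setI0 ?precedes_disjoint // cards0 subn0. Qed.

Lemma rank_in_setUl x : x \in J -> rank_in (J :|: K) x = rank_in J x.
Proof.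
move=> xJ; rewrite /rank_in; congr #|pred_of_set _|; apply/setP => y; rewrite !inE.
case yK: (y \in K); last by rewrite orbF.
by rewrite ltnNge ltnW ?andbF ?orbT ?(JK xJ yK) //; case: (y \in J).
Qed.

Lemma rank_in_setUr x : x \in K -> rank_in (J :|: K) x = (#|J| + rank_in K x)%N.
Proof.
move=> xK; rewrite /rank_in.
have -> : [set y in J :|: K | (y < x)%N] = J :|: [set y in K | (y < x)%N].
  by apply/setP => y; rewrite !inE; case yJ: (y \in J); rewrite ?(JK yJ xK).
rewrite cardsU disjoint_setI0 ?cards0 ?subn0 //.
by apply: disjointWr precedes_disjoint; apply/fintype.subsetP => y; rewrite inE => /andP[].
Qed.

Lemma embed_setU_lshift j k (t : {set 'I_j}) : #|J| = j ->
  embed (J :|: K) [set lshift k i | i in t] = embed J t.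
Proof.
move=> cardJ; apply/setP => x; rewrite !inE.
case xJ: (x \in J) => /=.
  rewrite -/(rank_in (J :|: K) x) rank_in_setUl //.
  apply/existsP/existsP => [[_ /andP[/imsetP[i it ->] e]]|[i /andP[it e]]].
    by exists i; rewrite it.
  by exists (lshift k i); rewrite imset_f.
case xK: (x \in K) => //=; apply/negbTE/negP => /existsP[_ /andP[/imsetP[i _ ->] /eqP e]].
have := ltn_ord i; rewrite [nat_of_ord i]e -/(rank_in (J :|: K) x) rank_in_setUr //.
by rewrite cardJ ltnNge leq_addr.
Qed.

Lemma embed_setU_rshift j k (t : {set 'I_k}) : #|J| = j ->
  embed (J :|: K) [set rshift j i | i in t] = embed K t.
Proof.
move=> cardJ; apply/setP => x; rewrite !inE.
case xK: (x \in K); rewrite ?orbT ?andbT ?orbF ?andbF /=.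
  rewrite -/(rank_in (J :|: K) x) rank_in_setUr // cardJ.
  apply/existsP/existsP => [[_ /andP[/imsetP[i it ->] e]]|[i /andP[it e]]].
    by exists i; rewrite it -(eqn_add2l j).
  by exists (rshift j i); rewrite imset_f //= eqn_add2l.
case xJ: (x \in J) => //=; apply/negbTE/negP => /existsP[_ /andP[/imsetP[i _ ->] /eqP e]].
by have := rank_in_lt xJ; rewrite -rank_in_setUl // /rank_in -e cardJ /= ltnNge leq_addr.
Qed.

End precedes.

End rank.

Lemma exists_subset_card (T : finType) (S : {set T}) k :
  k <= #|S| -> exists2 S' : {set T}, S' \subset S & #|S'| = k.
Proof.
elim: k => [|k IH] kS; first by exists finset.set0; rewrite ?finset.sub0set ?cards0.
have [S' S'S cardS'] := IH (ltnW kS).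
have /properP[_ [x xS xS']] : S' \proper S by rewrite properEcard S'S cardS'.
exists (x |: S'); first by rewrite finset.subUset finset.sub1set xS S'S.
by rewrite cardsU1 xS' cardS'.
Qed.

Definition initial_segment n j : {set 'I_n} := [set x : 'I_n | (x < j)%N].

Lemma card_initial_segment n j : j <= n -> #|initial_segment n j| = j.
Proof.
move=> jn; have inj : injective (widen_ord jn) by move=> a b e; apply: val_inj; exact: (congr1 val e).
rewrite -[RHS](card_ord j) -(card_imset _ inj).
congr #|pred_of_set _|; apply/setP => x; rewrite inE.
apply/idP/imsetP => [xj|[i _ ->]]; last exact: (ltn_ord i).
by exists (Ordinal xj) => //; apply: val_inj.
Qed.

Lemma exists_subset_above n j k (I : {set 'I_n}) : (j + k <= #|I|)%N ->
  exists2 K : {set 'I_n}, K \subset I & #|K| = k /\ precedes (initial_segment n j) K.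
Proof.
move=> jkI; pose above := [set x in I | (j <= x)%N].
have : k <= #|above|.
  have : I \subset initial_segment n j :|: above.
    by apply/fintype.subsetP => x xI; rewrite !inE xI /=; case: ltnP.
  have jn : j <= n by rewrite -(card_ord n); apply: leq_trans (max_card I); lia.
  move/subset_leq_card/leq_trans/(_ (leq_card_setU _ _)).
  rewrite card_initial_segment //; lia.
case/exists_subset_card => K Ka cardK; exists K; last split => //.
  by apply: fintype.subset_trans Ka _; apply/fintype.subsetP => x; rewrite inE => /andP[].
move=> x y; rewrite inE => xj /(fintype.subsetP Ka); rewrite inE => /andP[_].
exact: leq_trans.
Qed.

Section dsub_maps.
Variable d : nat.

Lemma card_embed_dsub n k (S : {set 'I_n}) (cardS : #|S| = k) (t : dsub k d) :
  #|embed S (val t)| == d.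
Proof. by rewrite (card_embed _ cardS); exact: (valP t). Qed.

Definition dsub_embed n k (S : {set 'I_n}) (cardS : #|S| = k) (t : dsub k d) : dsub n d :=
  exist _ (embed S (val t)) (card_embed_dsub cardS t).

Lemma card_lshift_dsub j k (t : dsub j d) : #|[set lshift k i | i in val t]| == d.
Proof. by rewrite card_imset; [exact: (valP t) | exact: lshift_inj]. Qed.

Definition dsub_lshift j k (t : dsub j d) : dsub (j + k) d :=
  exist _ [set lshift k i | i in val t] (card_lshift_dsub k t).

Lemma card_rshift_dsub j k (t : dsub k d) : #|[set rshift j i | i in val t]| == d.
Proof. by rewrite card_imset; [exact: (valP t) | exact: rshift_inj]. Qed.

Definition dsub_rshift j k (t : dsub k d) : dsub (j + k) d :=
  exist _ [set rshift j i | i in val t] (card_rshift_dsub j t).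

End dsub_maps.

Local Open Scope classical_set_scope.

Section generated_sigma_algebra.
Context {A B : Type} (F : A -> B) (G : set (set B)).

Lemma g_sigma_preimage_sub (S : set (set A)) : sigma_algebra setT S ->
  (forall g, G g -> S (F @^-1` g)) -> forall C, <<s G >> C -> S (F @^-1` C).
Proof.
move=> sigmaS GS C GC.
suff : <<s G >> `<=` image_set_system setT F S by move/(_ C GC); rewrite /image_set_system /= setTI.
apply: smallest_sub; first exact: sigma_algebra_image.
by move=> g Gg; rewrite /image_set_system /= setTI; exact: GS.
Qed.

Lemma g_sigma_preimage_exists (H : set (set A)) :
  (forall h, H h -> exists2 g, <<s G >> g & h = F @^-1` g) ->
  forall h, <<s H >> h -> exists2 g, <<s G >> g & h = F @^-1` g.
Proof.
move=> HG h Hh.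
suff : <<s H >> `<=` preimage_set_system setT F <<s G >>.
  by move/(_ h Hh) => [g Gg <-]; exists g; rewrite ?setTI.
apply: smallest_sub; first exact/sigma_algebra_preimage/smallest_sigma_algebra.
by move=> _ /HG[g Gg ->]; exists g; rewrite ?setTI.
Qed.

End generated_sigma_algebra.

Lemma sigma_algebra_setI {A : Type} (S : set (set A)) : sigma_algebra setT S ->
  forall U V, S U -> S V -> S (U `&` V).
Proof.
case=> S0 SC SU U V SUU SV.
rewrite -[U]setCK -[V]setCK -setCU -setTD; apply: (SC); rewrite -bigcup2E.
by apply: SU => -[|[|i]] /=; rewrite -?setTD; [exact: SC | exact: SC | exact: S0].
Qed.

Lemma sigma_algebra_setD {A : Type} (S : set (set A)) : sigma_algebra setT S ->
  forall U V, S U -> S V -> S (U `\` V).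
Proof.
move=> sigmaS U V SUU SV; rewrite setDE; apply: sigma_algebra_setI => //.
by rewrite -setTD; case: sigmaS => _ SC _; exact: SC.
Qed.

Section prod_meas.
Context {dX : measure_display} {Xs : measurableType dX}.

Lemma sigma_algebra_prod_meas (D : finType) : sigma_algebra setT (@prod_meas D _ Xs).
Proof. exact: smallest_sigma_algebra. Qed.

Lemma prod_meas_coord (D : finType) (i : D) (A : set Xs) : measurable A ->
  prod_meas ((fun x : D -> Xs => x i) @^-1` A).
Proof. by move=> mA; apply: sub_sigma_algebra; exists i => //; exists A. Qed.

Lemma prod_meas_comp (D1 D2 : finType) (h : D2 -> D1) (C : set (D2 -> Xs)) :
  prod_meas C -> prod_meas ((fun x : D1 -> Xs => x \o h) @^-1` C).
Proof.
apply: g_sigma_preimage_sub; first exact: sigma_algebra_prod_meas.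
by move=> _ [i _ [A mA <-]]; exact: prod_meas_coord.
Qed.

End prod_meas.

Section sigmaF.
Context {dT dX : measure_display} {T : measurableType dT} {Xs : measurableType dX}.
Variables (n d : nat) (X : {set 'I_n} -> T -> Xs).
Implicit Types (S J K s : {set 'I_n}).

Lemma sigma_algebra_sigmaF S : sigma_algebra setT (sigmaF d X S).
Proof. exact: smallest_sigma_algebra. Qed.

Lemma sigmaF_subset S1 S2 : S1 \subset S2 -> sigmaF d X S1 `<=` sigmaF d X S2.
Proof.
move=> S12; apply: sub_sigma_algebra2 => _ [s [A [sS1 cards mA ->]]].
by exists s, A; split => //; exact: fintype.subset_trans S12.
Qed.

Lemma sigmaF_measurable S : (forall s, #|s| = d -> measurable_fun setT (X s)) ->
  sigmaF d X S `<=` measurable.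
Proof.
move=> mX; apply: smallest_sub; first exact: sigma_algebra_measurable.
by move=> _ [s [A [_ cards mA ->]]]; rewrite -[_ @^-1` _]setTI; exact: mX.
Qed.

Lemma sigmaF_subarray k S C : #|S| = k -> prod_meas C ->
  sigmaF d X S (subarray (k:=k) (d:=d) X S @^-1` C).
Proof.
move=> cardS; apply: g_sigma_preimage_sub; first exact: sigma_algebra_sigmaF.
move=> _ [t _ [A mA <-]]; apply: sub_sigma_algebra; exists (embed S (val t)), A; split => //.
- by apply/fintype.subsetP => x; rewrite inE => /andP[].
- by rewrite (card_embed _ cardS); apply/eqP; exact: (valP t).
Qed.

Lemma sigmaF_subarrayP k S A : #|S| = k -> sigmaF d X S A ->
  exists2 C, prod_meas C & A = subarray (k:=k) (d:=d) X S @^-1` C.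
Proof.
move=> cardS; apply: g_sigma_preimage_exists => _ [s [B [sS cards mB ->]]].
have [t ?] := embed_onto cardS sS; subst s.
have cardt : #|t| == d by rewrite -(card_embed t cardS) cards.
by exists ((fun x : dsub k d -> Xs => x (exist _ t cardt)) @^-1` B); first exact: prod_meas_coord.
Qed.

Lemma subarray_setU_lshift j k J K w : precedes J K -> #|J| = j ->
  subarray (k:=j + k) (d:=d) X (J :|: K) w \o dsub_lshift k = subarray (k:=j) X J w.
Proof. by move=> JK cardJ; apply/funext => t; rewrite /subarray /= embed_setU_lshift. Qed.

Lemma subarray_setU_rshift j k J K w : precedes J K -> #|J| = j ->
  subarray (k:=j + k) (d:=d) X (J :|: K) w \o dsub_rshift j (k:=k) = subarray (k:=k) X K w.
Proof. by move=> JK cardJ; apply/funext => t; rewrite /subarray /= embed_setU_rshift. Qed.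

End sigmaF.

Section spreadable.
Context (R : realType) {dT dX : measure_display} {T : measurableType dT} {Xs : measurableType dX}.
Variables (n d : nat) (P : probability T R) (X : {set 'I_n} -> T -> Xs).

Lemma spreadable_setI j k J K J' K' C D : spreadable d P X ->
  precedes J K -> precedes J' K' -> #|J| = j -> #|J'| = j -> #|K| = k -> #|K'| = k ->
  (d <= j + k)%N -> prod_meas C -> prod_meas D ->
  P (subarray (k:=j) (d:=d) X J @^-1` C `&` subarray (k:=k) (d:=d) X K @^-1` D) =
  P (subarray (k:=j) (d:=d) X J' @^-1` C `&` subarray (k:=k) (d:=d) X K' @^-1` D).
Proof.
move=> spreadX JK JK' cardJ cardJ' cardK cardK' djk mC mD.
pose E := (fun z : dsub (j + k) d -> Xs => z \o dsub_lshift k) @^-1` C `&`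
          (fun z : dsub (j + k) d -> Xs => z \o dsub_rshift j (k:=k)) @^-1` D.
have mE : prod_meas E.
  by apply: (sigma_algebra_setI (sigma_algebra_prod_meas _)); exact: prod_meas_comp.
have setIE J1 K1 : precedes J1 K1 -> #|J1| = j ->
    subarray (k:=j) (d:=d) X J1 @^-1` C `&` subarray (k:=k) (d:=d) X K1 @^-1` D =
    subarray (k:=j + k) (d:=d) X (J1 :|: K1) @^-1` E.
  move=> JK1 cardJ1; apply/seteqP; split => w;
    by rewrite /E /preimage /= subarray_setU_lshift // subarray_setU_rshift.
rewrite !setIE //; apply: spreadX => //; by rewrite card_precedesU // ?cardJ ?cardJ' ?cardK ?cardK'.
Qed.

Lemma not_dissociated_ex beta l : ~ dissociated d P X beta l ->
  exists J K : {set 'I_n}, exists A B : set T,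
    [/\ (d <= #|J|)%N, (d <= #|K|)%N, (#|J| + #|K| <= l)%N, precedes J K &
        [/\ sigmaF d X J A, sigmaF d X K B & (beta%:E < `|P (A `&` B) - P A * P B|)%E]].
Proof.
move=> nd; apply: contrapT => nex; apply: nd => J K dJ dK JKl JK A B FA FB.
by rewrite leNgt; apply/negP => lt; apply: nex; exists J, K, A, B.
Qed.

End spreadable.

Local Open Scope ring_scope.

Section cond_exp_indicator.
Context (R : realType) {dT : measure_display} {T : measurableType dT} (P : probability T R).
Variables (F : set (set T)) (A : set T) (Y : T -> R).
Hypotheses (F_sigma : sigma_algebra setT F) (F_meas : F `<=` measurable) (mA : measurable A).
Hypothesis condY : cond_exp_version P F (\1_A) Y.
Local Open Scope ereal_scope.

Lemma cond_exp_indic_integral G : F G -> \int[P]_(x in G) (Y x)%:E = P (A `&` G).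
Proof.
by case: condY => _ _ condYG FG; rewrite condYG // integral_indic //; exact: F_meas.
Qed.

Lemma cond_exp_indic_close (c eps : R) G : F G -> (forall x, G x -> `|Y x - c| <= eps)%R ->
  `|P (A `&` G) - c%:E * P G| <= eps%:E * P G.
Proof.
move=> FG closeY; have mG := F_meas FG.
have iY : P.-integrable G (EFin \o Y).
  by case: condY => _ iY _; exact: integrableS iY.
rewrite -cond_exp_indic_integral // -!integral_cst //.
rewrite -integralB_EFin //; last exact: finite_measure_integrable_cst.
have mY : measurable_fun G (fun x => Y x - c)%R.
  by apply: measurable_funB => //; apply/measurable_EFinP; exact: measurable_int iY.
under eq_integral do rewrite -EFinB.
apply: le_trans (le_abse_integral _ _ _) _ => //; first exact/measurable_EFinP.
by apply: ge0_le_integral => //; apply/measurable_EFinP; apply: measurableT_comp.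
Qed.

Lemma cond_exp_level_set (c eps : R) : F [set w | eps <= `|Y w - c|]%R.
Proof.
case: condY => measY _ _; apply: (measY [set r | eps <= `|r - c|]%R).
rewrite -[X in measurable X]setTI; apply: measurable_fun_ler => //.
by apply: measurableT_comp => //; exact: measurable_funB.
Qed.

Lemma cond_exp_indic_deviation (eps : R) B : (0 <= eps)%R -> F B ->
  `|P (A `&` B) - P A * P B| <= P [set w | eps%:E <= `|(Y w)%:E - P A|] + eps%:E.
Proof.
move=> eps0 FB.
have fineP Z : measurable Z -> P Z = (fine (P Z))%:E by move=> mZ; rewrite fineK ?fin_num_measure.
set c := fine (P A).
have -> : [set w | eps%:E <= `|(Y w)%:E - P A|] = [set w | eps <= `|Y w - c|]%R.
  by apply/seteqP; split => w; rewrite /= (fineP A mA) -EFinB lee_fin.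
set E := [set w | _]; have FE : F E := cond_exp_level_set c eps.
have FG : F (B `\` E) := sigma_algebra_setD F_sigma FB FE.
have FH : F (B `&` E) := sigma_algebra_setI F_sigma FB FE.
have mB := F_meas FB; have mE := F_meas FE; have mG := F_meas FG; have mH := F_meas FH.
have mAH := measurableI _ _ mA mH; have mAG := measurableI _ _ mA mG.
have closeG : `|P (A `&` (B `\` E)) - c%:E * P (B `\` E)| <= eps%:E * P (B `\` E).
  by apply: cond_exp_indic_close => // x [_ /negP]; rewrite -ltNge => /ltW.
have PAH : P (A `&` (B `&` E)) <= P (B `&` E) by rewrite le_measure ?inE.
have PHE : P (B `&` E) <= P E by rewrite le_measure ?inE.
have PA1 := probability_le1 P mA; have PG1 := probability_le1 P mG.
have PB : P B = P (B `\` E) + P (B `&` E) := measureDI P mB mE.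
have PAB : P (A `&` B) = P (A `&` (B `\` E)) + P (A `&` (B `&` E)).
  by have := measureDI P (measurableI _ _ mA mB) mE; rewrite -setIDA -setIA.
move: closeG PAH PHE PA1 PG1; rewrite PAB PB.
rewrite (fineP _ mA) (fineP _ mE) (fineP _ mH) (fineP _ mG) (fineP _ mAH) (fineP _ mAG) -/c.
rewrite -!EFinM -!EFinD !abse_EFin !lee_fin.
have c0 : (0 <= c)%R := fine_ge0 (measure_ge0 P A).
have h0 := fine_ge0 (measure_ge0 P (B `&` E)).
have g0 := fine_ge0 (measure_ge0 P (B `\` E)).
have a0 := fine_ge0 (measure_ge0 P (A `&` (B `&` E))).
move=> + ah he c1 g1; rewrite !ler_norml => /andP[g_lo g_hi].
have ch : (c * fine (P (B `&` E)) <= fine (P (B `&` E)))%R by rewrite ler_piMl.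
have eg : (eps * fine (P (B `\` E)) <= eps)%R by rewrite ler_piMr.
apply/andP; split; nra.
Qed.

End cond_exp_indicator.

Theorem proposition2p8 (R : realType) (n d l : nat)
  (dT : measure_display) (T : measurableType dT)
  (dX : measure_display) (Xs : measurableType dX)
  (P : probability T R) (X : {set 'I_n} -> T -> Xs) (beta : R) :
  (0 < d)%N -> (d <= l)%N -> (l <= n)%N -> 0 < beta -> beta <= 1 ->
  (forall s : {set 'I_n}, #|s| = d -> measurable_fun setT (X s)) ->
  spreadable d P X ->
  ~ dissociated d P X beta l ->
  exists f : (dsub n d -> Xs) -> bool,
    prod_meas (f @^-1` [set true]) /\
    forall I : {set 'I_n}, #|I| = l ->
    forall Y : T -> R,
      cond_exp_version P (sigmaF d X I)
        (fun w => (f (fun s => X (val s) w) : nat)%:R) Y ->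
      ((beta / 2)%:E <= P [set w | (beta / 2)%:E <=
          `| (Y w)%:E - \int[P]_w' ((f (fun s => X (val s) w') : nat)%:R)%:E | ])%E.
Proof.
move=> _ _ ln beta0 _ mX spreadX /not_dissociated_ex[J [K [A [B [dJ dK JKl JK [FA FB devAB]]]]]].
have [C mC ?] := sigmaF_subarrayP (erefl #|J|) FA; subst A.
have [D mD ?] := sigmaF_subarrayP (erefl #|K|) FB; subst B.
have cardJ0 : #|initial_segment n #|J| | = #|J| by apply: card_initial_segment; lia.
pose f x := `[< C (x \o dsub_embed cardJ0) >].
exists f; split.
  suff -> : f @^-1` [set true] = (fun x : dsub n d -> Xs => x \o dsub_embed cardJ0) @^-1` C by exact: prod_meas_comp.
  by apply/seteqP; split => x /asboolP.
move=> I cardI Y.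
have [K' K'I [cardK' J0K']] := @exists_subset_above n #|J| #|K| I ltac:(lia).
pose A0 := subarray (k:=#|J|) (d:=d) X (initial_segment n #|J|) @^-1` C.
have mA0 : measurable A0 by apply: (sigmaF_measurable mX); exact: sigmaF_subarray cardJ0 mC.
have fXw w : (f (fun s => X (val s) w) : nat)%:R = \1_A0 w :> R by rewrite indicE.
have -> : (\int[P]_w ((f (fun s => X (val s) w) : nat)%:R)%:E = P A0)%E.
  by under eq_integral do rewrite fXw; rewrite integral_indic // setIT.
rewrite (funext fXw) => condY.
have FB' : sigmaF d X I (subarray (k:=#|K|) X K' @^-1` D).
  by apply: (sigmaF_subset K'I); exact: sigmaF_subarray cardK' mD.
have := cond_exp_indic_deviation (sigma_algebra_sigmaF d X I) (sigmaF_measurable mX) mA0 condY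
  (eps := beta / 2) ltac:(lra) FB'.
rewrite /A0 -(spreadable_setI spreadX JK J0K' (erefl _) cardJ0 (erefl _) cardK' _ mC mD); last lia.
rewrite -(spreadX _ _ _ (erefl _) cardJ0 dJ _ mC) -(spreadX _ _ _ (erefl _) cardK' dK _ mD).
move=> /(lt_le_trans devAB); rewrite -lteBlDr // -EFinB (_ : beta - beta / 2 = beta / 2) //; first exact: ltW.
lra.
Qed.
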